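(* Let $n > 3$ be a real number. Then $\cos^n x < 1 - \sin x$ for all real $x$ with $\frac{2\pi}{n+1} \leq x < \frac{\pi}{2}$. *)

From Stdlib Require Import Reals.

(* Since 1 - sin x = cos^2 x / (1 + sin x), the claim is cos^(n-2) x * (1 + sin x) < 1.
   For x > pi/3 this holds because cos x < 1/2 and n - 2 > 1.  For x <= pi/3 the
   hypothesis gives (n - 2) x >= pi; together with ln cos x <= cos x - 1 and the
   quartic Taylor bound on cos this yields cos^(n-2) x < exp (-x), while
   1 + sin x <= 1 + x <= exp x. *)
From Stdlib Require Import Reals Lra Psatz.
Open Scope R_scope.

Lemma ln_le_sub_1 (c : R) : 0 < c -> ln c <= c - 1.
Proof. intros hc. pose proof (exp_ineq1_le (ln c)) as h. rewrite exp_ln in h; lra. Qed.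

Lemma ln_lt_0 (c : R) : 0 < c < 1 -> ln c < 0.
Proof. intros hc. rewrite <- ln_1. apply ln_increasing; lra. Qed.

Lemma Rpower_plus_2 (c m : R) : 0 < c -> Rpower c (m + 2) = Rpower c m * c ^ 2.
Proof.
  intros hc. rewrite Rpower_plus. f_equal.
  replace 2 with (INR 2) by (simpl; ring). now apply Rpower_pow.
Qed.

Lemma Rpower_lt_base (c m : R) : 0 < c < 1 -> 1 < m -> Rpower c m < c.
Proof.
  intros hc hm. pose proof (ln_lt_0 c hc) as hL.
  rewrite <- (exp_ln c) at 2 by lra. apply exp_increasing. nra.
Qed.

Lemma cos_le_taylor4 (x : R) :
  - PI / 2 <= x -> x <= PI / 2 -> cos x <= 1 - x ^ 2 / 2 + x ^ 4 / 24.
Proof.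
  intros h1 h2. destruct (cos_bound x 0 h1 h2) as [_ h].
  unfold cos_approx, cos_term in h. simpl in h. simpl. lra.
Qed.

Lemma one_add_sin_le_exp (x : R) : 0 < x -> 1 + sin x <= exp x.
Proof. intros hx. pose proof (sin_lt_x x hx). pose proof (exp_ineq1_le x). lra. Qed.

(* The factor [1 - x^2/12] is at least [1 - (4/3)^2/12 > 2/pi] on [0, pi/3]. *)
Lemma lt_mul_quartic_taylor (m x : R) :
  0 < x -> x <= PI / 3 -> PI <= m * x -> x < m * (x ^ 2 / 2 - x ^ 4 / 24).
Proof.
  intros hx0 hx hmx. pose proof PI_4. pose proof PI2_3_2.
  assert (hf : 0 < x / 2 * (1 - x ^ 2 / 12)) by nra.
  replace (m * (x ^ 2 / 2 - x ^ 4 / 24)) with ((m * x) * (x / 2 * (1 - x ^ 2 / 12)))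
    by field.
  assert (x < PI * (x / 2 * (1 - x ^ 2 / 12))) by nra.
  nra.
Qed.

Lemma Rpower_cos_lt_exp_opp (m x : R) :
  0 < x -> x <= PI / 3 -> PI <= m * x -> Rpower (cos x) m < exp (- x).
Proof.
  intros hx0 hx hmx. pose proof PI2_3_2.
  assert (hc : 0 < cos x) by (apply cos_gt_0; lra).
  assert (hm : 0 < m) by nra.
  pose proof (ln_le_sub_1 _ hc).
  pose proof (cos_le_taylor4 x ltac:(lra) ltac:(lra)).
  pose proof (lt_mul_quartic_taylor m x hx0 hx hmx).
  unfold Rpower. apply exp_increasing. nra.
Qed.

Lemma Rpower_cos_mul_one_add_sin_lt_1 (m x : R) :
  1 < m -> 0 < x -> x < PI / 2 -> 2 * PI <= (m + 3) * x ->
  Rpower (cos x) m * (1 + sin x) < 1.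
Proof.
  intros hm hx0 hx hmx. pose proof PI2_3_2.
  assert (hc : 0 < cos x) by (apply cos_gt_0; lra).
  destruct (Rle_or_lt x (PI / 3)) as [hsmall | hlarge].
  - assert (hexp : Rpower (cos x) m < exp (- x))
      by (apply Rpower_cos_lt_exp_opp; nra).
    pose proof (one_add_sin_le_exp x hx0).
    pose proof (sin_gt_0 x hx0 ltac:(lra)).
    assert (Rpower (cos x) m * exp x < 1).
    { rewrite <- exp_0. replace 0 with (- x + x) by ring. rewrite exp_plus.
      apply Rmult_lt_compat_r; [apply exp_pos | exact hexp]. }
    nra.
  - assert (hhalf : cos x < 1 / 2).
    { rewrite <- cos_PI3. apply cos_decreasing_1; lra. }
    pose proof (Rpower_lt_base (cos x) m ltac:(lra) hm).
    pose proof (SIN_bound x). nra.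
Qed.

Lemma Rpower_cos_lt_one_sub_sin (m x : R) :
  0 < cos x -> 0 < 1 + sin x -> Rpower (cos x) m * (1 + sin x) < 1 ->
  Rpower (cos x) (m + 2) < 1 - sin x.
Proof.
  intros hc hs h. rewrite Rpower_plus_2 by exact hc.
  pose proof (sin2_cos2 x) as hp. unfold Rsqr in hp.
  apply (Rmult_lt_reg_r (1 + sin x)); [exact hs|].
  replace ((1 - sin x) * (1 + sin x)) with (cos x ^ 2) by nra.
  replace (Rpower (cos x) m * cos x ^ 2 * (1 + sin x))
    with ((Rpower (cos x) m * (1 + sin x)) * cos x ^ 2) by ring.
  assert (0 < cos x ^ 2) by nra. nra.
Qed.

Theorem mainTheorem2 (n : R) (hn : 3 < n) (x : R)
  (hx1 : 2 * PI / (n + 1) <= x) (hx2 : x < PI / 2) :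
  Rpower (cos x) n < 1 - sin x.
Proof.
  pose proof PI_RGT_0.
  assert (hx0 : 0 < x).
  { eapply Rlt_le_trans; [|exact hx1]. apply Rdiv_lt_0_compat; lra. }
  assert (hxn : 2 * PI <= (n - 2 + 3) * x).
  { replace (n - 2 + 3) with (n + 1) by ring.
    apply (Rmult_le_compat_r (n + 1)) in hx1; [|lra].
    unfold Rdiv in hx1. rewrite Rmult_assoc, Rinv_l in hx1; lra. }
  replace n with (n - 2 + 2) by ring.
  apply Rpower_cos_lt_one_sub_sin.
  - apply cos_gt_0; lra.
  - pose proof (sin_gt_0 x hx0 ltac:(lra)). lra.
  - apply Rpower_cos_mul_one_add_sin_lt_1; lra.
Qed.
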